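(* Let $f:\mathbb{R}^n\to\mathbb{R}$ be bounded below and continuously differentiable with $\nabla f$ Lipschitz with constant $L_{\nabla f}$. Let $x\in\mathbb{R}^n$, $\Delta>0$, points $y_1,\ldots,y_p$ with $\|y_i-x\|\le\beta\Delta$ for some $\beta>0$ and all $i$, and let $m$ be the minimum Frobenius norm quadratic interpolation model described in the context, with $\hat F$ invertible. Then its Hessian satisfies $\|H\|\le\kappa_H:=\frac{L_{\nabla f}}{2}p\beta^4\|\hat F^{-1}\|_\infty$.
   Context: Here $n+2\le p\le(n+1)(n+2)/2-1$. Let $\hat s_i=(y_i-x)/\Delta$, $\hat M\in\mathbb{R}^{p\times(n+1)}$ with $i$-th row $[1,\hat s_i^T]$, $\hat P\in\mathbb{R}^{p\times p}$ with $\hat P_{ij}=\tfrac12(\hat s_i^T\hat s_j)^2$, and $\hat F=\begin{bmatrix}\hat P&\hat M\\ \hat M^T&0\end{bmatrix}\in\mathbb{R}^{(p+n+1)\times(p+n+1)}$. The model is $m(y)=c+g^T(y-x)+\tfrac12(y-x)^TH(y-x)$ where $(\hat\lambda_1,\ldots,\hat\lambda_p,c,\hat g)$ solves $\hat F[\hat\lambda;c;\hat g]=[f(y_1);\ldots;f(y_p);0;0_n]$, $g=\hat g/\Delta$, and $H=\sum_{i=1}^p\lambda_i(y_i-x)(y_i-x)^T$ with $\lambda_i=\hat\lambda_i/\Delta^4$; equivalently $(c,g,H)$ minimizes $\tfrac14\|H\|_F^2$ over symmetric $H$ subject to $m(y_i)=f(y_i)$ for all $i$. $\|A\|_\infty$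 is the maximum absolute row sum; $\|H\|$ is the operator 2-norm. *)

From HB Require Import structures.
From mathcomp Require Import all_boot all_order all_algebra.
From mathcomp Require Import all_classical all_reals all_analysis.
Set Implicit Arguments. Unset Strict Implicit. Unset Printing Implicit Defensive.
Import Order.TTheory GRing.Theory Num.Theory.
Import numFieldNormedType.Exports.
Local Open Scope classical_set_scope.
Local Open Scope ring_scope.

Definition dotv {R : realType} {n : nat} (u v : 'cV[R]_n) : R :=
  \sum_(k < n) u k 0 * v k 0.
Definition norm2 {R : realType} {n : nat} (v : 'cV[R]_n) : R :=
  Num.sqrt (dotv v v).

Definition opnorm2 {R : realType} {n : nat} (A : 'M[R]_n) : R :=
  sup [set norm2 (A *m v) | v in [set v : 'cV[R]_n | norm2 v <= 1]].

Definition infnorm {R : realType} {m k : nat} (A : 'M[R]_(m, k)) : R :=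
  \big[Num.max/0]_(i < m) \sum_(j < k) `|A i j|.

Definition grad {R : realType} {n : nat} (f : 'cV[R]_n -> R) (x : 'cV[R]_n)
  : 'cV[R]_n := \col_(j < n) ('d f x (delta_mx j 0 : 'cV[R]_n)).

Definition shat {R : realType} {n p : nat} (x : 'cV[R]_n) (Delta : R)
  (y : 'I_p -> 'cV[R]_n) (i : 'I_p) : 'cV[R]_n := Delta^-1 *: (y i - x).

Definition Mhat {R : realType} {n p : nat} (x : 'cV[R]_n) (Delta : R)
  (y : 'I_p -> 'cV[R]_n) : 'M[R]_(p, 1 + n) :=
  row_mx (const_mx 1) (\matrix_(i < p, k < n) shat x Delta y i k 0).

Definition Phat {R : realType} {n p : nat} (x : 'cV[R]_n) (Delta : R)
  (y : 'I_p -> 'cV[R]_n) : 'M[R]_p :=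
  \matrix_(i < p, j < p) (2^-1 * (dotv (shat x Delta y i) (shat x Delta y j)) ^+ 2).

Definition Fhat {R : realType} {n p : nat} (x : 'cV[R]_n) (Delta : R)
  (y : 'I_p -> 'cV[R]_n) : 'M[R]_(p + (1 + n)) :=
  block_mx (Phat x Delta y) (Mhat x Delta y) (Mhat x Delta y)^T 0.

Definition model_hessian {R : realType} {n p : nat} (x : 'cV[R]_n) (Delta : R)
  (y : 'I_p -> 'cV[R]_n) (lamhat : 'cV[R]_p) : 'M[R]_n :=
  \sum_(i < p) ((lamhat i 0 / Delta ^+ 4) *: ((y i - x) *m (y i - x)^T)).

(* Let w = [f x; Delta grad f x]. Then Fhat [0; w] = [Mhat w; 0] and
   (Mhat w)_i = f x + <grad f x, y_i - x>, so Fhat ([lamhat; c; ghat] - [0; w])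
   is the vector of first-order Taylor remainders f y_i - f x - <grad f x, y_i - x>
   padded with zeros, each remainder at most (Lg/2) |y_i - x|^2 <= (Lg/2) beta^2 Delta^2 by the Lipschitz
   gradient. Hence |lamhat_i| <= |Fhat^-1|_oo (Lg/2) beta^2 Delta^2, and
   H v = sum_i (lamhat_i / Delta^4) <y_i - x, v> (y_i - x) has norm at most
   p |Fhat^-1|_oo (Lg/2) beta^4 |v|. *)

From HB Require Import structures.
From mathcomp Require Import all_boot all_order all_algebra.
From mathcomp Require Import all_classical all_reals all_analysis.
From mathcomp Require Import ring lra.
Import Order.TTheory GRing.Theory Num.Theory.
Import numFieldNormedType.Exports.
Local Open Scope classical_set_scope.
Local Open Scope ring_scope.

Section Dot.
Context {R : realType} {n : nat}.
Implicit Types u v w : 'cV[R]_n.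

Lemma dotvC u v : dotv u v = dotv v u.
Proof. by apply: eq_bigr => k _; rewrite mulrC. Qed.

Lemma dotvDl u v w : dotv (u + v) w = dotv u w + dotv v w.
Proof. by rewrite /dotv -big_split; apply: eq_bigr => k _; rewrite !mxE mulrDl. Qed.

Lemma dotvZl a u v : dotv (a *: u) v = a * dotv u v.
Proof. by rewrite /dotv mulr_sumr; apply: eq_bigr => k _; rewrite !mxE mulrA. Qed.

Lemma dotvBl u v w : dotv (u - v) w = dotv u w - dotv v w.
Proof. by rewrite dotvDl -scaleN1r dotvZl mulN1r. Qed.

Lemma dotvZr a u v : dotv u (a *: v) = a * dotv u v.
Proof. by rewrite dotvC dotvZl dotvC. Qed.

Lemma dotvBr u v w : dotv u (v - w) = dotv u v - dotv u w.
Proof. by rewrite !(dotvC u) dotvBl. Qed.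

Lemma dotv0r u : dotv u 0 = 0.
Proof. by rewrite -(scale0r 0) dotvZr mul0r. Qed.

Lemma dotv_suml m (a : 'I_m -> 'cV[R]_n) v :
  dotv (\sum_(i < m) a i) v = \sum_(i < m) dotv (a i) v.
Proof.
rewrite /dotv exchange_big; apply: eq_bigr => k _.
by rewrite summxE mulr_suml.
Qed.

Lemma dotvvr_ge0 u : 0 <= dotv u u.
Proof. by apply: sumr_ge0 => k _; rewrite -expr2 sqr_ge0. Qed.

Lemma dotvv_eq0 u : (dotv u u == 0) = (u == 0).
Proof.
apply/idP/eqP => [|->]; last by rewrite dotv0r.
rewrite psumr_eq0 => [/allP u0|k _]; last by rewrite -expr2 sqr_ge0.
apply/matrixP => i j; rewrite (ord1 j) mxE.
by apply/eqP; rewrite -sqrf_eq0 expr2; apply: implyP (u0 i (mem_index_enum _)) _.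
Qed.

Lemma norm2_ge0 u : 0 <= norm2 u.
Proof. exact: sqrtr_ge0. Qed.

Lemma norm2_gt0 u : (0 < norm2 u) = (u != 0).
Proof. by rewrite sqrtr_gt0 lt_def dotvv_eq0 dotvvr_ge0 andbT. Qed.

Lemma norm2_0 : norm2 (0 : 'cV[R]_n) = 0.
Proof. by rewrite /norm2 dotv0r sqrtr0. Qed.

Lemma norm2_sqr u : norm2 u ^+ 2 = dotv u u.
Proof. by rewrite sqr_sqrtr // dotvvr_ge0. Qed.

Lemma norm2Z a u : norm2 (a *: u) = `|a| * norm2 u.
Proof.
by rewrite /norm2 dotvZl dotvZr mulrA -expr2 sqrtrM ?sqr_ge0 // sqrtr_sqr.
Qed.

Lemma dotv_sqr_le u v : dotv u v ^+ 2 <= dotv u u * dotv v v.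
Proof.
have [/eqP|vv0] := eqVneq (dotv v v) 0.
  by rewrite dotvv_eq0 => /eqP ->; rewrite !dotv0r expr0n mulr0.
have vv_gt0 : 0 < dotv v v by rewrite lt_def vv0 dotvvr_ge0.
have := dotvvr_ge0 (dotv v v *: u - dotv u v *: v).
rewrite !(dotvBl, dotvBr, dotvZl, dotvZr) (dotvC v u).
have -> : forall a b c : R, a * (a * c - b * b) - b * (a * b - b * a)
  = a * (c * a - b ^+ 2) by move=> *; ring.
by rewrite pmulr_rge0 // subr_ge0.
Qed.

Lemma cauchy_schwarz u v : `|dotv u v| <= norm2 u * norm2 v.
Proof.
rewrite /norm2 -sqrtrM ?dotvvr_ge0 // -sqrtr_sqr.
exact/ler_wsqrtr/dotv_sqr_le.
Qed.

End Dot.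

Lemma ler_abs_increment (R : realType) (g G dg dG : R -> R) (a b : R) :
  a < b ->
  (forall t : R, is_derive t 1 g (dg t)) -> (forall t : R, is_derive t 1 G (dG t)) ->
  (forall t, t \in `]a, b[ -> `|dg t| <= dG t) ->
  `|g b - g a| <= G b - G a.
Proof.
move=> ab dg_g dG_G le_dgdG.
have increment_ge0 (h dh : R -> R) : (forall t : R, is_derive t 1 h (dh t)) ->
    (forall t, t \in `]a, b[ -> 0 <= dh t) -> 0 <= h b - h a.
  move=> dh_h dh_ge0.
  have h_cont : {within `[a, b], continuous h}.
    by apply: derivable_within_continuous => t _; case: (dh_h t).
  have [c cab ->] := MVT ab (fun t _ => dh_h t) h_cont.
  by rewrite mulr_ge0 ?dh_ge0 // subr_ge0 ltW.
have bounds t : t \in `]a, b[ -> - dG t <= dg t <= dG t.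
  by move/le_dgdG; rewrite ler_norml.
have /= := increment_ge0 (G - g) _ (fun t => is_deriveB (dG_G t) (dg_g t)).
have /= := increment_ge0 (G + g) _ (fun t => is_deriveD (dG_G t) (dg_g t)).
move=> GDg GBg; rewrite ler_norml; apply/andP; split.
- have : 0 <= G b + g b - (G a + g a).
    by apply: GDg => t /bounds /andP[? ?]; lra.
  lra.
- have : 0 <= G b - g b - (G a - g a).
    by apply: GBg => t /bounds /andP[? ?]; lra.
  lra.
Qed.

Lemma is_derive_along_line (R : realType) (V : normedModType R) (f : V -> R)
    (x h : V) (t : R) :
  differentiable f (t *: h + x) ->
  is_derive t 1 (fun s : R => f (s *: h + x)) ('d f (t *: h + x) h).
Proof.
move=> df; pose line (s : R) := s *: h + x.
have dline : differentiable line t.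
  by apply: differentiableD; [exact: ex_diff | exact: differentiable_cst].
have dcomp : differentiable (f \o line) t by exact: differentiable_comp.
have <- : 'd (f \o line) t 1 = 'd f (t *: h + x) h.
  rewrite diff_comp //=.
  have -> : 'd line t = ( *:%R^~ h) + 0 :> (R -> V) by apply: diff_val.
  by rewrite /= addr0 scale1r.
by rewrite -deriveE //; apply/derivableP/diff_derivable.
Qed.

Section Taylor.
Context {R : realType} {n : nat} {f : 'cV[R]_n -> R}.

Lemma diff_grad (z h : 'cV[R]_n) : 'd f z h = dotv (grad f z) h.
Proof.
rewrite {1}(matrix_sum_delta h) linear_sum /dotv; apply: eq_bigr => k _.
by rewrite big_ord1 linearZ /= mxE mulrC.
Qed.

Lemma lipschitz_grad_taylor {L : R} (x h : 'cV[R]_n) :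
  (forall z, differentiable f z) ->
  (forall u v, norm2 (grad f u - grad f v) <= L * norm2 (u - v)) ->
  `|f (h + x) - f x - dotv (grad f x) h| <= L / 2 * norm2 h ^+ 2.
Proof.
move=> df lipf.
set a := dotv (grad f x) h.
have dg (t : R) : is_derive t 1 (fun s : R => f (s *: h + x) - a * s)
    ('d f (t *: h + x) h - a).
  have := is_deriveB (@is_derive_along_line _ _ f x h t (df _))
    (is_deriveZ a (is_derive_id t (1 : R))).
  by rewrite [a *: 1]mulr1.
set K := L / 2 * norm2 h ^+ 2.
have dG (t : R) : is_derive t 1 (fun s : R => K * s ^+ 2) (L * norm2 h ^+ 2 * t).
  apply: is_derive_eq; rewrite /K.
  by rewrite -[_ *: _]/(L / 2 * norm2 h ^+ 2 * (t * 1 + t * 1)); field.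
have dg_le (t : R) : t \in `]0, 1[ -> `|'d f (t *: h + x) h - a| <= L * norm2 h ^+ 2 * t.
  rewrite in_itv /= => /andP[/ltW t_ge0 _].
  rewrite /a diff_grad -dotvBl; apply: le_trans (cauchy_schwarz _ _) _.
  have := lipf (t *: h + x) x; rewrite addrK norm2Z ger0_norm // => lip.
  have -> : L * norm2 h ^+ 2 * t = L * (t * norm2 h) * norm2 h by ring.
  by apply: ler_wpM2r lip; apply: norm2_ge0.
have := ler_abs_increment _ _ _ _ _ _ _ ltr01 dg dG dg_le.
rewrite /= scale1r scale0r add0r.
have -> : K * 1 ^+ 2 - K * 0 ^+ 2 = K by ring.
by have -> : f (h + x) - a * 1 - (f x - a * 0) = f (h + x) - f x - a by ring.
Qed.

End Taylor.

Section Norms.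
Context {R : realType} {n : nat}.

Lemma lipschitz_const_ge0 {m : nat} {g : 'cV[R]_n -> 'cV[R]_m} {L : R} :
  (0 < n)%N -> (forall u v, norm2 (g u - g v) <= L * norm2 (u - v)) -> 0 <= L.
Proof.
move=> n_gt0 lipg; pose e : 'cV[R]_n := delta_mx (Ordinal n_gt0) 0.
have e_gt0 : 0 < norm2 e.
  rewrite norm2_gt0; apply/eqP => /matrixP/(_ (Ordinal n_gt0) 0).
  by rewrite !mxE !eqxx => /eqP; rewrite oner_eq0.
have := lipg e 0; rewrite subr0 => lip.
by rewrite -(pmulr_lge0 _ e_gt0) (le_trans (norm2_ge0 _) lip).
Qed.

Lemma mulmx_outer (h v : 'cV[R]_n) : h *m h^T *m v = dotv h v *: h.
Proof.
apply/matrixP => k l; rewrite (ord1 l) !mxE /dotv mulr_suml.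
by apply: eq_bigr => j _; rewrite !mxE big_ord1 !mxE; ring.
Qed.

Lemma norm2_sum_outer_mulmx {m : nat} (a : 'I_m -> R) (h : 'I_m -> 'cV[R]_n) v :
  norm2 ((\sum_(i < m) a i *: (h i *m (h i)^T)) *m v)
    <= (\sum_(i < m) `|a i| * norm2 (h i) ^+ 2) * norm2 v.
Proof.
(* Bound |w|^2 = <w, H v> termwise and divide by |w|: no triangle inequality
   for norm2 is needed. *)
set w := _ *m v.
have [w0|w_neq0] := eqVneq w 0.
  rewrite w0 norm2_0 mulr_ge0 ?norm2_ge0 // sumr_ge0 // => i _.
  by rewrite mulr_ge0 ?exprn_ge0 ?norm2_ge0.
have w_gt0 : 0 < norm2 w by rewrite norm2_gt0.
rewrite -(ler_pM2r w_gt0) -expr2 norm2_sqr.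
have -> : dotv w w = \sum_(i < m) a i * (dotv (h i) v * dotv (h i) w).
  rewrite /w mulmx_suml dotv_suml; apply: eq_bigr => i _.
  by rewrite -scalemxAl mulmx_outer !dotvZl.
apply: le_trans (ler_norm _) _; apply: le_trans (ler_norm_sum _ _ _) _.
rewrite !mulr_suml; apply: ler_sum => i _.
have -> : `|a i| * norm2 (h i) ^+ 2 * norm2 v * norm2 w
    = `|a i| * (norm2 (h i) * norm2 v * (norm2 (h i) * norm2 w)) by ring.
by rewrite !normrM ler_wpM2l // ler_pM // cauchy_schwarz.
Qed.

Lemma opnorm2_le (A : 'M[R]_n) (C : R) :
  (forall v, norm2 v <= 1 -> norm2 (A *m v) <= C) -> opnorm2 A <= C.
Proof.
move=> A_le; apply: ge_sup => [|_ [v v_le1 <-]]; last exact: A_le.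
by exists (norm2 (A *m 0)), 0; rewrite //= norm2_0.
Qed.

Lemma abs_mulmx_le_infnorm {m k : nat} (A : 'M[R]_(m, k)) (r : 'cV[R]_k) (B : R) i :
  0 <= B -> (forall j, `|r j 0| <= B) -> `|(A *m r) i 0| <= infnorm A * B.
Proof.
move=> B_ge0 r_le; rewrite mxE; apply: le_trans (ler_norm_sum _ _ _) _.
apply: le_trans (_ : \sum_(j < k) `|A i j| * B <= _).
  by apply: ler_sum => j _; rewrite normrM ler_wpM2l.
rewrite -mulr_suml ler_wpM2r //.
exact: le_bigmax.
Qed.

End Norms.

Section Interpolation.
Context {R : realType} {n p : nat}.
Context {x : 'cV[R]_n} {Delta : R} {y : 'I_p -> 'cV[R]_n}.

Lemma Mhat_mul_affine (a : R) (g : 'cV[R]_n) i : Delta != 0 ->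
  (Mhat x Delta y *m col_mx (const_mx a) (Delta *: g)) i 0 = a + dotv g (y i - x).
Proof.
move=> Delta_neq0; rewrite /Mhat mul_row_col mxE; congr (_ + _).
  by rewrite mxE big_ord1 !mxE mul1r.
by rewrite mxE /dotv; apply: eq_bigr => k _; rewrite !mxE; field.
Qed.

Lemma opnorm2_model_hessian_le (lamhat : 'cV[R]_p) (C : R) :
  (forall i, `|lamhat i 0 / Delta ^+ 4| * norm2 (y i - x) ^+ 2 <= C) ->
  opnorm2 (model_hessian x Delta y lamhat) <= p%:R * C.
Proof.
move=> term_le; apply: opnorm2_le => v v_le1.
apply: le_trans (norm2_sum_outer_mulmx _ _ _) _.
have -> : p%:R * C = (\sum_(i < p) C) * 1 by rewrite sumr_const card_ord mulr1 mulr_natl.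
apply: ler_pM; rewrite ?norm2_ge0 //.
- by apply: sumr_ge0 => i _; rewrite mulr_ge0 ?exprn_ge0 ?norm2_ge0.
- by apply: ler_sum => i _; apply: term_le.
Qed.

Lemma Fhat_mul_col0 (w : 'cV[R]_(1 + n)) :
  Fhat x Delta y *m col_mx 0 w = col_mx (Mhat x Delta y *m w) 0.
Proof. by rewrite /Fhat mul_block_col !mulmx0 mul0mx add0r addr0. Qed.

Lemma interpolation_multiplier_le {lamhat : 'cV[R]_p} {c : 'cV[R]_1}
    {ghat : 'cV[R]_n} {fy : 'cV[R]_p} (a : R) (g : 'cV[R]_n) (B : R) :
  Delta != 0 -> Fhat x Delta y \in unitmx ->
  Fhat x Delta y *m col_mx lamhat (col_mx c ghat) = col_mx fy 0 ->
  0 <= B -> (forall i, `|fy i 0 - (a + dotv g (y i - x))| <= B) ->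
  forall i, `|lamhat i 0| <= infnorm (invmx (Fhat x Delta y)) * B.
Proof.
(* [0; w] solves the system whose data is the affine function a + <g, _ - x>,
   so lamhat is the multiplier block of F^-1 applied to the residual. *)
move=> Delta_neq0 F_unit F_sol B_ge0 fy_near i.
pose w : 'cV[R]_(1 + n) := col_mx (const_mx a) (Delta *: g).
pose r : 'cV[R]_(p + (1 + n)) := col_mx (fy - Mhat x Delta y *m w) (0 : 'cV[R]_(1 + n)).
have sol_shift : col_mx lamhat (col_mx c ghat) - col_mx 0 w
    = invmx (Fhat x Delta y) *m r.
  have -> : r = col_mx fy 0 - Fhat x Delta y *m col_mx 0 w.
    by rewrite Fhat_mul_col0 opp_col_mx add_col_mx oppr0 addr0.
  by rewrite -F_sol -mulmxBr mulKmx.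
have -> : lamhat i 0 = (invmx (Fhat x Delta y) *m r) (lshift _ i) 0.
  by rewrite -sol_shift !(col_mxEu, mxE) oppr0 addr0.
apply: abs_mulmx_le_infnorm => // j; rewrite /r.
case: (split_ordP j) => k ->; rewrite ?col_mxEu ?col_mxEd.
  by rewrite 2!mxE Mhat_mul_affine.
by rewrite mxE normr0.
Qed.

End Interpolation.

Theorem lemma5p14 (R : realType) (n p : nat) (f : 'cV[R]_n -> R) (Lg : R)
  (x : 'cV[R]_n) (Delta beta : R) (y : 'I_p -> 'cV[R]_n)
  (lamhat : 'cV[R]_p) (c : 'cV[R]_1) (ghat : 'cV[R]_n) :
  (n + 2 <= p)%N -> (p <= ((n + 1) * (n + 2)) %/ 2 - 1)%N ->
  (exists b : R, forall z, b <= f z) ->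
  (forall z, differentiable f z) ->
  continuous (grad f) ->
  (forall u v, norm2 (grad f u - grad f v) <= Lg * norm2 (u - v)) ->
  0 < Delta -> 0 < beta ->
  (forall i, norm2 (y i - x) <= beta * Delta) ->
  Fhat x Delta y \in unitmx ->
  Fhat x Delta y *m col_mx lamhat (col_mx c ghat)
    = col_mx (\col_(i < p) f (y i)) 0 ->
  opnorm2 (model_hessian x Delta y lamhat)
    <= Lg / 2 * p%:R * beta ^+ 4 * infnorm (invmx (Fhat x Delta y)).
Proof.
move=> p_ge p_le _ df _ lipf Delta_gt0 beta_gt0 y_near F_unit F_sol.
(* The bounds on p only exclude n = 0, where the Lipschitz hypothesis
   says nothing about the sign of Lg. *)
have n_gt0 : (0 < n)%N.
  rewrite lt0n; apply: contraTneq p_le => n0; rewrite -ltnNge.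
  by apply: leq_trans p_ge; rewrite n0.
have Lg_ge0 : 0 <= Lg := lipschitz_const_ge0 n_gt0 lipf.
set K := infnorm _; set B := Lg / 2 * (beta * Delta) ^+ 2.
have lam_le i : `|lamhat i 0| <= K * B.
  apply: (interpolation_multiplier_le (f x) (grad f x) B (lt0r_neq0 Delta_gt0) F_unit F_sol).
    by rewrite /B mulr_ge0 ?divr_ge0 ?exprn_ge0 // mulr_ge0 // ltW.
  move=> j; rewrite mxE opprD addrA.
  have := lipschitz_grad_taylor x (y j - x) df lipf; rewrite subrK => /le_trans.
  apply; apply: ler_wpM2l; first by rewrite divr_ge0.
  by rewrite !expr2 ler_pM ?norm2_ge0.
have -> : Lg / 2 * p%:R * beta ^+ 4 * K = p%:R * (Lg / 2 * beta ^+ 4 * K) by ring.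
apply: opnorm2_model_hessian_le => i.
have -> : Lg / 2 * beta ^+ 4 * K = K * B / Delta ^+ 4 * (beta * Delta) ^+ 2.
  by rewrite /B; field; rewrite lt0r_neq0.
have Delta4_gt0 : 0 < Delta ^+ 4 := exprn_gt0 4 Delta_gt0.
rewrite normrM normfV (gtr0_norm Delta4_gt0).
apply: ler_pM.
- by rewrite divr_ge0 // ltW.
- by rewrite exprn_ge0 ?norm2_ge0.
- by rewrite ler_pM2r ?invr_gt0.
- by rewrite !expr2 ler_pM ?norm2_ge0.
Qed.
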